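(* For all GP 2 programs (command sequences) $P$ and $Q$, $$P\ \mathtt{or}\ Q\ \equiv\ \mathtt{if}\ (\mathtt{remove!};\ \{\mathtt{create},\mathtt{null}\};\ \mathtt{zero})\ \mathtt{then}\ P\ \mathtt{else}\ Q,$$ where $\mathtt{remove}$ is a set of rule schemata that delete, respectively, an arbitrary non-loop edge, an arbitrary loop, and an arbitrary isolated node (labels given by list variables, with variants for every combination of marks, so that every edge, every loop and every isolated node of any host graph can be deleted by some schema in the set); $\mathtt{null}$ is the rule schema $\emptyset\Rightarrow\emptyset$; $\mathtt{create}$ is the rule schema $\emptyset\Rightarrow$ (a single unmarked node labelled $0$); and $\mathtt{zero}$ is the rule schema that matches a single unmarked node labelled $0$ and leaves it unchanged.
   Context: Host graphs are finite directed graphs (parallel edges and loops allowed) whose nodes and edges carry labels in $\mathcal{L}=(\mathbb{Z}\cup\mathrm{Char}^* )^*\times\{\mathrm{true},\mathrm{false}\}$ (a list of integers and strings together with a ''mark'' bit); graphs are considered up to isomorphism. A rule schema application $G\Rightarrow_r H$ consists of finding an injective match of the left graph of $r$ in $G$ (determining the values of the variables so that labels agree, and satisfying the rule's condition), deleting the images of the left-hand items not in the interface subject to the dangling condition (no deleted node may be incident to an undeleted edge), adding the right-hand items not in the interface, and relabelling interface nodes according to the right-hand side. For a set $R$ of rule schemata, $G\Rightarrow_R H$ means $G\Rightarrow_r H$ for some $r\in R$, and $G\not\Rightarrow_R$ means no such $H$ exists. Programs. Command sequences: ComSeq ::= Com {; Com}; Com ::= RuleSetCall | if ComSeq then ComSeq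 [else ComSeq] | try ComSeq then ComSeq [else ComSeq] | ComSeq ! | ComSeq or ComSeq | skip | fail; RuleSetCall ::= a rule schema name or a set $\{r_1,\dots,r_n\}$ ($n\ge 0$) of rule schemata. Operational semantics: a transition relation $\to$ from configurations $\langle P,G\rangle$ to configurations $\langle P',H\rangle$, graphs $H$, or fail, generated by the rules (with $R$ a rule set call, $C,P,P',Q$ command sequences, $G,H$ host graphs, $\to^+$ the transitive closure): [call1] $G\Rightarrow_R H$ implies $\langle R,G\rangle\to H$; [call2] $G\not\Rightarrow_R$ implies $\langle R,G\rangle\to\mathrm{fail}$; [seq1] $\langle P,G\rangle\to\langle P',H\rangle$ implies $\langle P;Q,G\rangle\to\langle P';Q,H\rangle$; [seq2] $\langle P,G\rangle\to H$ implies $\langle P;Q,G\rangle\to\langle Q,H\rangle$; [seq3] $\langle P,G\rangle\to\mathrm{fail}$ implies $\langle P;Q,G\rangle\to\mathrm{fail}$; [if1] $\langle C,G\rangle\to^+H$ implies $\langle \mathtt{if}\ C\ \mathtt{then}\ P\ \mathtt{else}\ Q,G\rangle\to\langle P,G\rangle$; [if2] $\langle C,G\rangle\to^+\mathrm{fail}$ implies $\langle \mathtt{if}\ C\ \mathtt{then}\ P\ \mathtt{else}\ Q,G\rangle\to\langle Q,G\rangle$; [try1] $\langle C,G\rangle\to^+H$ implies $\langle \mathtt{try}\ C\ \mathtt{then}\ P\ \mathtt{else}\ Q,G\rangle\to\langle P,H\rangle$; [try2] $\langle C,G\rangle\to^+\mathrm{fail}$ implies $\langle \mathtt{try}\ C\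 \mathtt{then}\ P\ \mathtt{else}\ Q,G\rangle\to\langle Q,G\rangle$; [alap1] $\langle P,G\rangle\to^+H$ implies $\langle P!,G\rangle\to\langle P!,H\rangle$; [alap2] $\langle P,G\rangle\to^+\mathrm{fail}$ implies $\langle P!,G\rangle\to G$; [or1] $\langle P\ \mathtt{or}\ Q,G\rangle\to\langle P,G\rangle$; [or2] $\langle P\ \mathtt{or}\ Q,G\rangle\to\langle Q,G\rangle$; [skip] $\langle\mathtt{skip},G\rangle\to G$; [fail] $\langle\mathtt{fail},G\rangle\to\mathrm{fail}$; [if3] $\langle C,G\rangle\to^+H$ implies $\langle\mathtt{if}\ C\ \mathtt{then}\ P,G\rangle\to\langle P,G\rangle$; [if4] $\langle C,G\rangle\to^+\mathrm{fail}$ implies $\langle\mathtt{if}\ C\ \mathtt{then}\ P,G\rangle\to G$; [try3] $\langle C,G\rangle\to^+H$ implies $\langle\mathtt{try}\ C\ \mathtt{then}\ P,G\rangle\to\langle P,H\rangle$; [try4] $\langle C,G\rangle\to^+\mathrm{fail}$ implies $\langle\mathtt{try}\ C\ \mathtt{then}\ P,G\rangle\to G$. A configuration is terminal if it has no successor. $P$ can diverge from $G$ if there is an infinite sequence $\langle P,G\rangle\to\langle P_1,G_1\rangle\to\langle P_2,G_2\rangle\to\cdots$; $P$ can get stuck from $G$ if $\langle P,G\rangle\to^*\langle Q,H\rangle$ for some terminal configuration $\langle Q,H\rangle$. Semantic function: $[\![P]\!]G=\{X\in\mathcal{G}(\mathcal{L})\cup\{\mathrm{fail}\}\mid \langle P,G\rangle\to^+X\}\cup\{\bot\mid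 P\text{ can diverge or get stuck from }G\}$. Programs are semantically equivalent, $P\equiv Q$, if $[\![P]\!]=[\![Q]\!]$. *)

From Stdlib Require Import Bool ZArith String List Permutation Arith.
Import ListNotations.
Set Implicit Arguments.

(* An atom is an integer or a string; a label is a list of atoms plus a mark bit. *)
Inductive atom : Type := AInt (z : Z) | AStr (s : string).
Definition label : Type := (list atom * bool)%type.

Definition atom_eq_dec : forall a b : atom, {a = b} + {a <> b}.
Proof. decide equality; [apply Z.eq_dec | apply string_dec]. Defined.
Definition label_eq_dec : forall a b : label, {a = b} + {a <> b}.
Proof. decide equality; [apply Bool.bool_dec | apply (list_eq_dec atom_eq_dec)]. Defined.

Definition dlab : label := ([], false).

(* Nodes are 0 .. length nodes - 1 (with their labels); edges are a list of
   (source, target, label); parallel edges and loops are allowed. *)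
Record graph : Type := mkGraph { nodes : list label ; edges : list (nat * nat * label) }.
Definition dedge : nat * nat * label := (0, 0, dlab).

Definition nnodes (G : graph) : nat := length (nodes G).
Definition nedges (G : graph) : nat := length (edges G).
Definition src (e : nat * nat * label) : nat := fst (fst e).
Definition tgt (e : nat * nat * label) : nat := snd (fst e).
Definition elab (e : nat * nat * label) : label := snd e.

Definition host (G : graph) : Prop :=
  Forall (fun e => src e < nnodes G /\ tgt e < nnodes G) (edges G).

Definition map_edge (f : nat -> nat) (e : nat * nat * label) : nat * nat * label :=
  (f (src e), f (tgt e), elab e).

Definition iso (G H : graph) : Prop :=
  nnodes G = nnodes H /\
  exists f : nat -> nat,
    (forall i, i < nnodes G -> f i < nnodes H) /\
    (forall i j, i < nnodes G -> j < nnodes G -> f i = f j -> i = j) /\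
    (forall i, i < nnodes G -> nth (f i) (nodes H) dlab = nth i (nodes G) dlab) /\
    Permutation (map (map_edge f) (edges G)) (edges H).

(* A rule instance: left graph, right graph, and the interface as a list of
   pairs (left node, right node) identified by the interface.  (In GP 2 the
   interface consists of nodes only; all left edges are deleted and all right
   edges are created.)  Labels here are fully instantiated host labels. *)
Record rule : Type := mkRule { lhs : graph ; rhs : graph ; iface : list (nat * nat) }.

Definition rule_wf (r : rule) : Prop :=
  host (lhs r) /\ host (rhs r) /\
  NoDup (map fst (iface r)) /\ NoDup (map snd (iface r)) /\
  Forall (fun p => fst p < nnodes (lhs r) /\ snd p < nnodes (rhs r)) (iface r).

Definition in_iface_l (r : rule) (i : nat) : bool :=
  existsb (fun p => Nat.eqb (fst p) i) (iface r).
Definition in_iface_r (r : rule) (j : nat) : bool :=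
  existsb (fun p => Nat.eqb (snd p) j) (iface r).

Definition is_match (r : rule) (G : graph) (m me : nat -> nat) : Prop :=
  (forall i, i < nnodes (lhs r) -> m i < nnodes G /\
        nth (m i) (nodes G) dlab = nth i (nodes (lhs r)) dlab) /\
  (forall i j, i < nnodes (lhs r) -> j < nnodes (lhs r) -> m i = m j -> i = j) /\
  (forall k, k < nedges (lhs r) -> me k < nedges G /\
        nth (me k) (edges G) dedge = map_edge m (nth k (edges (lhs r)) dedge)) /\
  (forall k l, k < nedges (lhs r) -> l < nedges (lhs r) -> me k = me l -> k = l).

Definition deleted (r : rule) (m : nat -> nat) (v : nat) : bool :=
  existsb (fun i => Nat.eqb (m i) v && negb (in_iface_l r i))
          (seq 0 (nnodes (lhs r))).

Definition edge_deleted (r : rule) (me : nat -> nat) (k : nat) : bool :=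
  existsb (fun l => Nat.eqb (me l) k) (seq 0 (nedges (lhs r))).

Definition dangling_ok (r : rule) (G : graph) (m me : nat -> nat) : Prop :=
  forall k, k < nedges G -> edge_deleted r me k = false ->
    deleted r m (src (nth k (edges G) dedge)) = false /\
    deleted r m (tgt (nth k (edges G) dedge)) = false.

Definition kept (r : rule) (m : nat -> nat) (G : graph) : list nat :=
  filter (fun v => negb (deleted r m v)) (seq 0 (nnodes G)).
Definition newidx (r : rule) (m : nat -> nat) (G : graph) (v : nat) : nat :=
  length (filter (fun w => Nat.ltb w v) (kept r m G)).
Definition relabel (r : rule) (m : nat -> nat) (G : graph) (v : nat) : label :=
  match find (fun p => Nat.eqb (m (fst p)) v) (iface r) with
  | Some p => nth (snd p) (nodes (rhs r)) dlab
  | None => nth v (nodes G) dlab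
  end.
Definition fresh (r : rule) : list nat :=
  filter (fun j => negb (in_iface_r r j)) (seq 0 (nnodes (rhs r))).
Definition ridx (r : rule) (m : nat -> nat) (G : graph) (j : nat) : nat :=
  match find (fun p => Nat.eqb (snd p) j) (iface r) with
  | Some p => newidx r m G (m (fst p))
  | None => length (kept r m G) + length (filter (fun w => Nat.ltb w j) (fresh r))
  end.
Definition kept_edges (r : rule) (me : nat -> nat) (G : graph) : list nat :=
  filter (fun k => negb (edge_deleted r me k)) (seq 0 (nedges G)).

Definition result_graph (r : rule) (m me : nat -> nat) (G : graph) : graph :=
  mkGraph
    (map (relabel r m G) (kept r m G) ++
     map (fun j => nth j (nodes (rhs r)) dlab) (fresh r))
    (map (fun k => map_edge (newidx r m G) (nth k (edges G) dedge)) (kept_edges r me G) ++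
     map (map_edge (ridx r m G)) (edges (rhs r))).

(* A rule schema is given by its admissible instances: [s r G m] holds when
   the instance r (obtained by assigning values to the schema's variables)
   may be applied to host graph G with node match m (the condition of the
   schema may depend on G and m). *)
Definition schema : Type := rule -> graph -> (nat -> nat) -> Prop.

Definition schema_step (s : schema) (G H : graph) : Prop :=
  exists r m me, s r G m /\ rule_wf r /\ is_match r G m me /\
                 dangling_ok r G m me /\ iso (result_graph r m me G) H.

Definition ruleset_step (R : list schema) (G H : graph) : Prop :=
  exists s, In s R /\ schema_step s G H.

Inductive prog : Type :=
  | Call (R : list schema)                 (* rule set call; a name r is [r] *)
  | Seq (P Q : prog)
  | IfTE (C P Q : prog)
  | IfT (C P : prog)
  | TryTE (C P Q : prog)
  | TryT (C P : prog)
  | Alap (P : prog)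
  | Or (P Q : prog)
  | Skip
  | Fail.

Inductive config : Type := Conf (P : prog) (G : graph).
Inductive target : Type :=
  | TConf (c : config) | TGraph (G : graph) | TFail.

Inductive step : config -> target -> Prop :=
  | s_call1 R G H : ruleset_step R G H -> step (Conf (Call R) G) (TGraph H)
  | s_call2 R G : (forall H, ~ ruleset_step R G H) -> step (Conf (Call R) G) TFail
  | s_seq1 P P' Q G H : step (Conf P G) (TConf (Conf P' H)) ->
      step (Conf (Seq P Q) G) (TConf (Conf (Seq P' Q) H))
  | s_seq2 P Q G H : step (Conf P G) (TGraph H) ->
      step (Conf (Seq P Q) G) (TConf (Conf Q H))
  | s_seq3 P Q G : step (Conf P G) TFail -> step (Conf (Seq P Q) G) TFail
  | s_if1 C P Q G H : plus (Conf C G) (TGraph H) -> step (Conf (IfTE C P Q) G) (TConf (Conf P G))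
  | s_if2 C P Q G : plus (Conf C G) TFail -> step (Conf (IfTE C P Q) G) (TConf (Conf Q G))
  | s_try1 C P Q G H : plus (Conf C G) (TGraph H) -> step (Conf (TryTE C P Q) G) (TConf (Conf P H))
  | s_try2 C P Q G : plus (Conf C G) TFail -> step (Conf (TryTE C P Q) G) (TConf (Conf Q G))
  | s_alap1 P G H : plus (Conf P G) (TGraph H) -> step (Conf (Alap P) G) (TConf (Conf (Alap P) H))
  | s_alap2 P G : plus (Conf P G) TFail -> step (Conf (Alap P) G) (TGraph G)
  | s_or1 P Q G : step (Conf (Or P Q) G) (TConf (Conf P G))
  | s_or2 P Q G : step (Conf (Or P Q) G) (TConf (Conf Q G))
  | s_skip G : step (Conf Skip G) (TGraph G)
  | s_fail G : step (Conf Fail G) TFail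
  | s_if3 C P G H : plus (Conf C G) (TGraph H) -> step (Conf (IfT C P) G) (TConf (Conf P G))
  | s_if4 C P G : plus (Conf C G) TFail -> step (Conf (IfT C P) G) (TGraph G)
  | s_try3 C P G H : plus (Conf C G) (TGraph H) -> step (Conf (TryT C P) G) (TConf (Conf P H))
  | s_try4 C P G : plus (Conf C G) TFail -> step (Conf (TryT C P) G) (TGraph G)
with plus : config -> target -> Prop :=
  | p_one c t : step c t -> plus c t
  | p_more c c' t : step c (TConf c') -> plus c' t -> plus c t.

Inductive star : config -> config -> Prop :=
  | st_refl c : star c c
  | st_step c c' c'' : step c (TConf c') -> star c' c'' -> star c c''.

Definition terminal (c : config) : Prop := forall t, ~ step c t.

Definition can_diverge (P : prog) (G : graph) : Prop :=
  exists f : nat -> config, f 0 = Conf P G /\ forall n, step (f n) (TConf (f (S n))).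

Definition can_get_stuck (P : prog) (G : graph) : Prop :=
  exists c, star (Conf P G) c /\ terminal c.

Inductive result : Type := RGraph (H : graph) | RFail | RBot.

Definition sem (P : prog) (G : graph) (X : result) : Prop :=
  match X with
  | RGraph H => plus (Conf P G) (TGraph H)
  | RFail => plus (Conf P G) TFail
  | RBot => can_diverge P G \/ can_get_stuck P G
  end.

Definition res_iso (X Y : result) : Prop :=
  match X, Y with
  | RGraph G, RGraph H => iso G H
  | RFail, RFail => True
  | RBot, RBot => True
  | _, _ => False
  end.

Definition sem_equiv (P Q : prog) : Prop :=
  forall G, host G ->
    (forall X, sem P G X -> exists Y, sem Q G Y /\ res_iso X Y) /\
    (forall Y, sem Q G Y -> exists X, sem P G X /\ res_iso X Y).

Definition empty_graph : graph := mkGraph [] [].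
Definition zero_label : label := ([AInt 0%Z], false).

Definition remove_edge : schema := fun r _ _ =>
  exists a b c : label,
    r = mkRule (mkGraph [a; b] [(0, 1, c)]) (mkGraph [a; b] []) [(0, 0); (1, 1)].
Definition remove_loop : schema := fun r _ _ =>
  exists a c : label,
    r = mkRule (mkGraph [a] [(0, 0, c)]) (mkGraph [a] []) [(0, 0)].
Definition remove_node : schema := fun r _ _ =>
  exists a : label, r = mkRule (mkGraph [a] []) empty_graph [].
Definition remove : list schema := [remove_edge; remove_loop; remove_node].

Definition null : schema := fun r _ _ => r = mkRule empty_graph empty_graph [].
Definition create : schema := fun r _ _ =>
  r = mkRule empty_graph (mkGraph [zero_label] []) [].
Definition zero : schema := fun r _ _ =>
  r = mkRule (mkGraph [zero_label] []) (mkGraph [zero_label] []) [(0, 0)].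

Definition cond_prog : prog :=
  Seq (Alap (Call remove)) (Seq (Call [create; null]) (Call [zero])).

(* The two programs differ only in their first transition: [P or Q]
   moves nondeterministically to P or to Q, while the conditional moves to P when
   the condition can succeed and to Q when it can fail.  The condition
   C = remove!; {create, null}; zero can do BOTH on every host graph G:
   remove! deletes edges, loops and isolated nodes until the empty graph is
   reached (each deletion shrinks |V| + |E|, and only the empty graph admits no
   deletion); then create followed by zero succeeds, while null followed by zero
   fails.  Hence both configurations have exactly the same one-step successors,
   and configurations with the same successors have the same semantics. *)
From Pilot Require Import Defs.
From Stdlib Require Import Bool List Permutation Arith Lia.
Import ListNotations.

Definition same_steps (c1 c2 : config) : Prop := forall t, step c1 t <-> step c2 t.

Lemma same_steps_sym c1 c2 : same_steps c1 c2 -> same_steps c2 c1.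
Proof. intros E t; symmetry; apply E. Qed.

Lemma plus_of_same_steps c1 c2 t : same_steps c1 c2 -> plus c1 t -> plus c2 t.
Proof.
  intros E Hp; inversion Hp; subst.
  - apply p_one, E; assumption.
  - eapply p_more; [apply E; eassumption | assumption].
Qed.

Lemma bot_of_same_steps P1 G1 P2 G2 :
  same_steps (Conf P1 G1) (Conf P2 G2) -> ~ terminal (Conf P1 G1) ->
  can_diverge P1 G1 \/ can_get_stuck P1 G1 -> can_diverge P2 G2 \/ can_get_stuck P2 G2.
Proof.
  intros E NT [[f [f0 Hf]] | [c [Hst Ht]]].
  - left. exists (fun n => match n with 0 => Conf P2 G2 | _ => f n end).
    split; [reflexivity |].
    intros [| n]; [apply E; rewrite <- f0; apply Hf | apply Hf].
  - right. inversion Hst; subst.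
    + exfalso; apply NT, Ht.
    + exists c; split; [eapply st_step; [apply E; eassumption | assumption] | assumption].
Qed.

Lemma sem_of_same_steps P1 G1 P2 G2 X :
  same_steps (Conf P1 G1) (Conf P2 G2) -> ~ terminal (Conf P1 G1) ->
  sem P1 G1 X -> sem P2 G2 X.
Proof.
  intros E NT; destruct X; simpl.
  1, 2: apply plus_of_same_steps; exact E.
  apply bot_of_same_steps; assumption.
Qed.

Lemma or_same_steps_if C P Q G :
  (exists H, plus (Conf C G) (TGraph H)) -> plus (Conf C G) TFail ->
  same_steps (Conf (Or P Q) G) (Conf (IfTE C P Q) G).
Proof.
  intros [H HS] HF t; split; intros Hs; inversion Hs; subst.
  - eapply s_if1; eassumption.
  - eapply s_if2; eassumption.
  - apply s_or1.
  - apply s_or2.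
Qed.

Lemma plus_seq P Q G H t :
  plus (Conf P G) (TGraph H) -> plus (Conf Q H) t -> plus (Conf (Seq P Q) G) t.
Proof.
  remember (Conf P G) as c eqn:Ec; remember (TGraph H) as tH eqn:Et.
  intros Hp; revert P G Ec Et; induction Hp; intros P0 G0 Ec Et Hq; subst.
  - eapply p_more; [apply s_seq2; eassumption | exact Hq].
  - destruct c' as [P' G']. eapply p_more; [apply s_seq1; eassumption |].
    eapply IHHp; eauto.
Qed.

Lemma iso_refl G : iso G G.
Proof.
  split; [reflexivity |]. exists (fun i => i). repeat split; auto.
  replace (map (map_edge (fun i => i)) (edges G)) with (edges G); [apply Permutation_refl |].
  rewrite <- map_id at 1. apply map_ext. intros [[a b] c]; reflexivity.
Qed.

Lemma res_iso_refl X : res_iso X X.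
Proof. destruct X; simpl; auto using iso_refl. Qed.

Definition size (G : graph) : nat := nnodes G + nedges G.

Lemma length_filter_lt {A} (f : A -> bool) l x :
  In x l -> f x = false -> length (filter f l) < length l.
Proof.
  induction l as [| a l IH]; simpl; intros Hi Hf; [destruct Hi |].
  destruct Hi as [<- | Hi].
  - rewrite Hf. pose proof (filter_length_le f l); lia.
  - destruct (f a); simpl; specialize (IH Hi Hf); lia.
Qed.

Lemma filter_seq_length_le (f : nat -> bool) n : length (filter f (seq 0 n)) <= n.
Proof. rewrite <- (length_seq n 0) at 2; apply filter_length_le. Qed.

Lemma filter_seq_length_lt (f : nat -> bool) n x :
  x < n -> f x = false -> length (filter f (seq 0 n)) < n.
Proof.
  intros Hx Hf; rewrite <- (length_seq n 0) at 2.
  apply length_filter_lt with x; [apply in_seq; lia | exact Hf].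
Qed.

Lemma newidx_lt r m G v : In v (kept r m G) -> newidx r m G v < length (kept r m G).
Proof. intros Hv; apply length_filter_lt with v; [exact Hv | apply Nat.ltb_irrefl]. Qed.

Lemma kept_spec r m G v :
  v < nnodes G -> deleted r m v = false -> In v (kept r m G).
Proof. intros Hv Hd; apply filter_In; rewrite in_seq, Hd; split; [lia | reflexivity]. Qed.

Section DeletingRule.
  Variables (r : rule) (m me : nat -> nat) (G : graph).
  Hypotheses (HG : host G) (Hredges : edges (rhs r) = []) (Hfresh : fresh r = [])
             (Hdangle : dangling_ok r G m me).

  Lemma deleting_result_host : host (result_graph r m me G).
  Proof.
    unfold host, result_graph; simpl. rewrite Hredges, app_nil_r.
    apply Forall_forall; intros e He.
    apply in_map_iff in He; destruct He as [k [<- Hk]].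
    apply filter_In in Hk; destruct Hk as [Hk Hkd]. apply in_seq in Hk.
    apply negb_true_iff in Hkd.
    destruct (Hdangle k ltac:(lia) Hkd) as [Ds Dt].
    assert (Hin : In (nth k (edges G) dedge) (edges G)) by (apply nth_In; unfold nedges in Hk; lia).
    unfold host in HG; rewrite Forall_forall in HG. destruct (HG _ Hin) as [Ss St].
    unfold nnodes; simpl; rewrite length_app, !length_map.
    pose proof (newidx_lt _ _ _ _ (kept_spec r m G _ Ss Ds)).
    pose proof (newidx_lt _ _ _ _ (kept_spec r m G _ St Dt)).
    unfold map_edge, src, tgt in *; simpl; lia.
  Qed.

  Lemma deleting_result_smaller :
    (exists v, v < nnodes G /\ deleted r m v = true) \/
    (exists k, k < nedges G /\ edge_deleted r me k = true) ->
    size (result_graph r m me G) < size G.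
  Proof.
    unfold size, result_graph, nnodes, nedges; simpl.
    rewrite Hredges, Hfresh; simpl; rewrite !app_nil_r, !length_map.
    unfold kept, kept_edges, nnodes, nedges.
    pose proof (filter_seq_length_le (fun v => negb (deleted r m v)) (length (nodes G))).
    pose proof (filter_seq_length_le (fun k => negb (edge_deleted r me k)) (length (edges G))).
    intros [[v [Hv Hd]] | [k [Hk Hd]]].
    - pose proof (filter_seq_length_lt (fun v => negb (deleted r m v)) _ v Hv
                    ltac:(cbv beta; rewrite Hd; reflexivity)); lia.
    - pose proof (filter_seq_length_lt (fun k => negb (edge_deleted r me k)) _ k Hk
                    ltac:(cbv beta; rewrite Hd; reflexivity)); lia.
  Qed.
End DeletingRule.

Lemma ruleset_step_result R s r m me G H :
  In s R -> s r G m -> rule_wf r -> is_match r G m me -> dangling_ok r G m me ->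
  result_graph r m me G = H -> ruleset_step R G H.
Proof.
  intros Hin Hs Hwf Hm Hd <-; exists s; split; [exact Hin |].
  exists r, m, me; auto using iso_refl.
Qed.

Lemma deleted_none r m v :
  (forall i, i < nnodes (lhs r) -> in_iface_l r i = true) -> deleted r m v = false.
Proof.
  intros H; apply not_true_iff_false; intros E.
  apply existsb_exists in E; destruct E as [i [Hi Hb]]; apply in_seq in Hi.
  rewrite H in Hb by lia; rewrite andb_false_r in Hb; discriminate.
Qed.

Lemma no_match_without_nodes r G m me :
  nnodes G = 0 -> 0 < nnodes (lhs r) -> ~ is_match r G m me.
Proof. intros H1 H2 [Hm _]; destruct (Hm 0 H2) as [Hl _]; lia. Qed.

Lemma first_edge_deleted r me :
  0 < nedges (lhs r) -> me 0 = 0 -> edge_deleted r me 0 = true.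
Proof.
  intros Hl Hme; unfold edge_deleted; destruct (nedges (lhs r)) as [| n]; [lia |].
  simpl; rewrite Hme; reflexivity.
Qed.

Definition remove_shrinks (G : graph) : Prop :=
  exists H, ruleset_step Defs.remove G H /\ host H /\ size H < size G.

Lemma remove_node_progress G :
  host G -> 0 < nnodes G -> edges G = [] -> remove_shrinks G.
Proof.
  intros HG Hn HE.
  set (r := mkRule (mkGraph [nth 0 (nodes G) dlab] []) empty_graph []).
  set (m := fun _ : nat => 0); set (me := fun _ : nat => 0).
  assert (Hd : dangling_ok r G m me)
    by (intros k Hk; unfold nedges in Hk; rewrite HE in Hk; simpl in Hk; lia).
  exists (result_graph r m me G); split; [| split].
  - apply ruleset_step_result
      with (s := remove_node) (r := r) (m := m) (me := me);
      [simpl; auto | eexists; reflexivity | | | exact Hd | reflexivity].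
    + unfold rule_wf, host; simpl; repeat split; repeat constructor.
    + unfold is_match, nnodes, nedges; simpl; split; [| split; [| split]]; intros; try lia.
      replace i with 0 by lia; split; [exact Hn | reflexivity].
  - apply deleting_result_host; auto.
  - apply deleting_result_smaller; auto. left; exists 0; split; [exact Hn | reflexivity].
Qed.

Lemma remove_loop_progress G s c rest :
  host G -> edges G = (s, s, c) :: rest -> remove_shrinks G.
Proof.
  intros HG HE. assert (Hs : s < nnodes G).
  { unfold host in HG; rewrite HE in HG; inversion HG as [| x l [Hs _]]; exact Hs. }
  set (a := nth s (nodes G) dlab).
  set (r := mkRule (mkGraph [a] [(0, 0, c)]) (mkGraph [a] []) [(0, 0)]).
  set (m := fun _ : nat => s); set (me := fun _ : nat => 0).
  assert (Hd : dangling_ok r G m me).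
  { intros k _ _; rewrite !deleted_none; auto.
    all: intros i Hi; unfold nnodes in Hi; simpl in Hi; destruct i; [reflexivity | lia]. }
  exists (result_graph r m me G); split; [| split].
  - apply ruleset_step_result
      with (s := remove_loop) (r := r) (m := m) (me := me);
      [simpl; auto | do 2 eexists; reflexivity | | | exact Hd | reflexivity].
    + unfold rule_wf, host, nnodes, src, tgt; simpl; repeat split; repeat constructor; simpl.
      all: tauto.
    + unfold is_match, nnodes, nedges; simpl; split; [| split; [| split]]; intros; try lia.
      * replace i with 0 by lia; split; [exact Hs | reflexivity].
      * replace k with 0 by lia; rewrite HE; split; [unfold me; simpl; lia | reflexivity].
  - apply deleting_result_host; auto.
  - apply deleting_result_smaller; auto. right; exists 0.
    split; [unfold nedges; rewrite HE; simpl; lia |].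
    apply first_edge_deleted; [unfold nedges; simpl; lia | reflexivity].
Qed.

Lemma remove_edge_progress G s t c rest :
  host G -> edges G = (s, t, c) :: rest -> s <> t -> remove_shrinks G.
Proof.
  intros HG HE Hst. assert (Hs : s < nnodes G /\ t < nnodes G).
  { unfold host in HG; rewrite HE in HG; inversion HG as [| x l H]; exact H. }
  destruct Hs as [Hs Ht].
  set (a := nth s (nodes G) dlab); set (b := nth t (nodes G) dlab).
  set (r := mkRule (mkGraph [a; b] [(0, 1, c)]) (mkGraph [a; b] []) [(0, 0); (1, 1)]).
  set (m := fun i : nat => match i with 0 => s | _ => t end); set (me := fun _ : nat => 0).
  assert (Hd : dangling_ok r G m me).
  { intros k _ _; rewrite !deleted_none; auto.
    all: intros i Hi; unfold nnodes in Hi; simpl in Hi;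
         destruct i as [| [| i]]; [reflexivity | reflexivity | lia]. }
  exists (result_graph r m me G); split; [| split].
  - apply ruleset_step_result
      with (s := remove_edge) (r := r) (m := m) (me := me);
      [simpl; auto | do 3 eexists; reflexivity | | | exact Hd | reflexivity].
    + unfold rule_wf, host, nnodes, src, tgt; simpl; repeat split; repeat constructor; simpl;
        try lia; try tauto.
      all: intros [H | []]; discriminate.
    + unfold is_match, nnodes, nedges; simpl; split; [| split; [| split]].
      * intros [| [| i]] Hi; [| | lia].
        all: split; [assumption | reflexivity].
      * intros [| [| i]] [| [| j]] Hi Hj Hij; simpl in *; lia.
      * intros k Hk; replace k with 0 by lia; rewrite HE.
        split; [unfold me; simpl; lia | reflexivity].
      * intros; lia.
  - apply deleting_result_host; auto.
  - apply deleting_result_smaller; auto. right; exists 0.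
    split; [unfold nedges; rewrite HE; simpl; lia |].
    apply first_edge_deleted; [unfold nedges; simpl; lia | reflexivity].
Qed.

Lemma remove_progress G : host G -> 0 < nnodes G -> remove_shrinks G.
Proof.
  intros HG Hn. destruct (edges G) as [| [[s t] c] rest] eqn:HE.
  - apply remove_node_progress; assumption.
  - destruct (Nat.eq_dec s t) as [<- | Hst].
    + eapply remove_loop_progress; eassumption.
    + eapply remove_edge_progress; eassumption.
Qed.

Lemma host_without_nodes G : host G -> nnodes G = 0 -> G = empty_graph.
Proof.
  intros HG Hn; destruct G as [[| v vs] [| e es]]; unfold nnodes in Hn; simpl in Hn;
    try lia; [reflexivity |].
  unfold host in HG; inversion HG; subst; unfold nnodes in *; simpl in *; lia.
Qed.

(* Every schema of [remove] has a nonempty left-hand side, so none applies to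
   the empty graph. *)
Lemma remove_fails_on_empty H : ~ ruleset_step Defs.remove empty_graph H.
Proof.
  intros [s [Hin [r [m [me [Hs [_ [Hm _]]]]]]]].
  simpl in Hin; destruct Hin as [<- | [<- | [<- | []]]].
  - destruct Hs as [a [b [c ->]]].
    eapply no_match_without_nodes; eauto; unfold nnodes; simpl; lia.
  - destruct Hs as [a [c ->]].
    eapply no_match_without_nodes; eauto; unfold nnodes; simpl; lia.
  - destruct Hs as [a ->].
    eapply no_match_without_nodes; eauto; unfold nnodes; simpl; lia.
Qed.

Lemma alap_remove_empties G :
  host G -> plus (Conf (Alap (Call Defs.remove)) G) (TGraph empty_graph).
Proof.
  remember (size G) as n eqn:Hn; revert G Hn.
  induction n as [n IH] using lt_wf_ind; intros G Hn HG.
  destruct (Nat.eq_dec (nnodes G) 0) as [H0 | H0].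
  - rewrite (host_without_nodes G HG H0).
    apply p_one, s_alap2, p_one, s_call2, remove_fails_on_empty.
  - destruct (remove_progress G HG ltac:(lia)) as [H [Hst [HH Hlt]]].
    eapply p_more; [eapply s_alap1, p_one, s_call1, Hst |].
    apply (IH (size H)); [lia | reflexivity | exact HH].
Qed.

Definition zero_graph : graph := mkGraph [zero_label] [].

Lemma create_applies : step (Conf (Call [create; null]) empty_graph) (TGraph zero_graph).
Proof.
  apply s_call1, ruleset_step_result
    with (s := create) (r := mkRule empty_graph zero_graph []) (m := fun _ => 0) (me := fun _ => 0);
    [simpl; auto | reflexivity | | | | reflexivity].
  - unfold rule_wf, host; simpl; repeat split; repeat constructor.
  - unfold is_match, nnodes, nedges; simpl; repeat split; intros; lia.
  - intros k Hk; unfold nedges in Hk; simpl in Hk; lia.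
Qed.

Lemma null_applies : step (Conf (Call [create; null]) empty_graph) (TGraph empty_graph).
Proof.
  apply s_call1, ruleset_step_result
    with (s := null) (r := mkRule empty_graph empty_graph []) (m := fun _ => 0) (me := fun _ => 0);
    [simpl; auto | reflexivity | | | | reflexivity].
  - unfold rule_wf, host; simpl; repeat split; repeat constructor.
  - unfold is_match, nnodes, nedges; simpl; repeat split; intros; lia.
  - intros k Hk; unfold nedges in Hk; simpl in Hk; lia.
Qed.

Lemma zero_applies : step (Conf (Call [zero]) zero_graph) (TGraph zero_graph).
Proof.
  apply s_call1, ruleset_step_result
    with (s := zero) (r := mkRule zero_graph zero_graph [(0, 0)])
         (m := fun _ => 0) (me := fun _ => 0);
    [simpl; auto | reflexivity | | | | reflexivity].
  - unfold rule_wf, host, nnodes; simpl; repeat split; repeat constructor; simpl; try lia; tauto.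
  - unfold is_match, nnodes, nedges; simpl; split; [| split; [| split]]; intros; try lia.
    replace i with 0 by lia; split; [lia | reflexivity].
  - intros k Hk; unfold nedges in Hk; simpl in Hk; lia.
Qed.

Lemma zero_fails_on_empty : step (Conf (Call [zero]) empty_graph) TFail.
Proof.
  apply s_call2; intros H [s [Hin [r [m [me [Hs [_ [Hm _]]]]]]]].
  simpl in Hin; destruct Hin as [<- | []]; rewrite Hs in Hm.
  eapply no_match_without_nodes; eauto; unfold nnodes; simpl; lia.
Qed.

(* On every host graph the condition can succeed (via create) and fail (via null). *)
Lemma cond_succeeds_and_fails G : host G ->
  (exists H, plus (Conf cond_prog G) (TGraph H)) /\ plus (Conf cond_prog G) TFail.
Proof.
  intros HG; pose proof (alap_remove_empties G HG) as Hempty; split.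
  - exists zero_graph; apply plus_seq with empty_graph; [exact Hempty |].
    eapply p_more; [apply s_seq2, create_applies | apply p_one, zero_applies].
  - apply plus_seq with empty_graph; [exact Hempty |].
    eapply p_more; [apply s_seq2, null_applies | apply p_one, zero_fails_on_empty].
Qed.

Theorem mainTheorem2 (P Q : prog) :
  sem_equiv (Or P Q) (IfTE cond_prog P Q).
Proof.
  intros G HG.
  destruct (cond_succeeds_and_fails G HG) as [Hsucc Hfail].
  pose proof (or_same_steps_if cond_prog P Q G Hsucc Hfail) as E.
  assert (Hor : ~ terminal (Conf (Or P Q) G)) by (intros T; eapply T, s_or1).
  assert (Hif : ~ terminal (Conf (IfTE cond_prog P Q) G)) by (intros T; eapply T, E, s_or1).
  split; intros X HX; exists X; split; auto using res_iso_refl.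
  - exact (sem_of_same_steps _ _ _ _ _ E Hor HX).
  - exact (sem_of_same_steps _ _ _ _ _ (same_steps_sym _ _ E) Hif HX).
Qed.
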